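(* Let $\mathcal{T}$ be a tangle of order $k$ in a connectivity system $(E,\lambda)$, and let $(R,G)$ be a $\mathcal{T}$-strong $k$-separation of $\lambda$. (i) If $A\subseteq G$ is a non-empty $\mathcal{T}$-weak set such that $R\cup A$ is $k$-separating, and $G-A$ is $\mathcal{T}$-strong, then $(R,G)$ is $\mathcal{T}$-equivalent to $(R\cup A, G-A)$. (ii) If $(R,G)$ is a non-sequential $k$-separation, and $A\subseteq G$ is a non-empty $\mathcal{T}$-weak set such that $R\cup A$ is $k$-separating, then $(R\cup A, G-A)$ is $\mathcal{T}$-equivalent to $(R,G)$. (iii) If $(R,G)$ is a non-sequential $k$-separation, then $(\mathrm{fcl}_{\mathcal{T}}(R), E-\mathrm{fcl}_{\mathcal{T}}(R))$ is $\mathcal{T}$-equivalent to $(R,G)$. (iv) If $(R,G)$ is a non-sequential $k$-separation, and $X$ is a $k$-separating set such that $E-\mathrm{fcl}_{\mathcal{T}}(G)\subseteq X\subseteq R$, then $(X,E-X)$ is $\mathcal{T}$-equivalent to $(R,G)$.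
   Context: A connectivity system is a pair $(E,\lambda)$ with $E$ finite and $\lambda$ an integer-valued symmetric submodular function on subsets of $E$. $X$ is $k$-separating if $\lambda(X)\le k$; a $k$-separation is an unordered partition $(X,E-X)$ with $\lambda(X)\le k$. A tangle of order $k$ is a collection $\mathcal T$ of subsets of $E$ with (T1) $\lambda(A)<k$ for $A\in\mathcal T$; (T2) if $\lambda(A)\le k-1$ then $A\in\mathcal T$ or $E-A\in\mathcal T$; (T3) $A\cup B\cup C\ne E$ for $A,B,C\in\mathcal T$; (T4) $E-\{e\}\notin\mathcal T$ for $e\in E$. A set is $\mathcal T$-weak if contained in a member of $\mathcal T$, and $\mathcal T$-strong otherwise; a $k$-separation is $\mathcal T$-strong if both parts are. A $\mathcal T$-strong $k$-separating set $X$ is fully closed if $X\cup Y$ is not $k$-separating for every nonempty $\mathcal T$-weak $Y\subseteq E-X$; $\mathrm{fcl}_{\mathcal T}(X)$ is the intersection of all fully closed $k$-separating sets containing $X$. $\mathcal T$-strong $k$-separations $(X,Y),(X',Y')$ are $\mathcal T$-equivalent if $\{\mathrm{fcl}_{\mathcal T}(X),\mathrm{fcl}_{\mathcal T}(Y)\}=\{\mathrm{fcl}_{\mathcal T}(X'),\mathrm{fcl}_{\mathcal T}(Y')\}$. A $k$-separating set $X$ is $\mathcal T$-sequential if $E-X$ is $\mathcal T$-strong and $\mathrm{fcl}_{\mathcal T}(E-X)=E$; a $k$-separation is non-sequential if neither part is $\mathcal T$-sequential. *)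

From HB Require Import structures.
From mathcomp Require Import all_boot all_order all_algebra.
Set Implicit Arguments. Unset Strict Implicit. Unset Printing Implicit Defensive.
Import Order.TTheory GRing.Theory Num.Theory.
Local Open Scope ring_scope.

(* Connectivity systems over a finite ground set E = the finType T,
   with an integer-valued connectivity function lam. *)
Section Connectivity.
Variable T : finType.
Variable lam : {set T} -> int.

Definition symmetric_conn : Prop := forall X : {set T}, lam X = lam (~: X).
Definition submodular_conn : Prop :=
  forall X Y : {set T}, lam (X :&: Y) + lam (X :|: Y) <= lam X + lam Y.
Definition connectivity_system : Prop := symmetric_conn /\ submodular_conn.

Variable k : int.

Definition kseparating (X : {set T}) : bool := lam X <= k.

Definition tangle (Tg : {set {set T}}) : Prop :=
  [/\ (forall A, A \in Tg -> lam A < k),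
      (forall A, lam A <= k - 1 -> (A \in Tg) \/ (~: A \in Tg)),
      (forall A B C, A \in Tg -> B \in Tg -> C \in Tg -> A :|: B :|: C != setT) &
      (forall e : T, ~: [set e] \notin Tg)].

Variable Tg : {set {set T}}.

Definition tweak (Y : {set T}) : bool := [exists A in Tg, Y \subset A].
Definition tstrong (Y : {set T}) : bool := ~~ tweak Y.

Definition fully_closed (X : {set T}) : bool :=
  [&& tstrong X, kseparating X &
      [forall Y : {set T},
         ((Y != set0) && tweak Y && (Y \subset ~: X)) ==> ~~ kseparating (X :|: Y)]].

(* full closure: intersection of all fully closed k-separating sets containing X
   (empty intersection = E) *)
Definition fcl (X : {set T}) : {set T} :=
  \bigcap_(Y : {set T} | fully_closed Y && (X \subset Y)) Y.

Definition strong_ksep (X Y : {set T}) : bool :=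
  [&& Y == ~: X, kseparating X, tstrong X & tstrong Y].

Definition tequiv (X Y X' Y' : {set T}) : bool :=
  [&& strong_ksep X Y, strong_ksep X' Y' &
      (((fcl X == fcl X') && (fcl Y == fcl Y')) ||
       ((fcl X == fcl Y') && (fcl Y == fcl X')))].

Definition tsequential (X : {set T}) : bool :=
  [&& kseparating X, tstrong (~: X) & fcl (~: X) == setT].

Definition nonsequential (X Y : {set T}) : bool :=
  ~~ tsequential X && ~~ tsequential Y.

End Connectivity.

From Pilot Require Import Defs.
From mathcomp Require Import all_boot all_order all_algebra.
From mathcomp Require Import zify.
Set Implicit Arguments. Unset Strict Implicit. Unset Printing Implicit Defensive.
Import Order.TTheory GRing.Theory Num.Theory.
Local Open Scope ring_scope.

(* Let P be T-strong and P :|: W be k-separating for a T-weak W.  A fully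
   closed Y containing P but not P :|: W would, by submodularity, make
   Y :&: (P :|: W) (k-1)-separating; the tangle then makes either P or ~: Y
   weak, and a fully closed set never has a nonempty weak complement since
   lam E <= lam Y <= k.  So such moves leave full closures unchanged, and
   absorbing weak sets into R until none can be added shows that fcl R is
   itself fully closed whenever fcl R <> E. *)

Section FullClosure.
Variables (T : finType) (lam : {set T} -> int) (k : int) (Tg : {set {set T}}).
Hypothesis lamC : symmetric_conn lam.
Hypothesis lam_submod : submodular_conn lam.
Hypothesis tangle_sep : forall A, lam A <= k - 1 -> (A \in Tg) \/ (~: A \in Tg).

Local Notation kseparating := (kseparating lam k).
Local Notation fully_closed := (fully_closed lam k Tg).
Local Notation fcl := (fcl lam k Tg).
Local Notation tweak := (tweak Tg).
Local Notation tstrong := (tstrong Tg).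

Lemma tweakS (A B : {set T}) : A \subset B -> tweak B -> tweak A.
Proof.
move=> AB /existsP [C /andP [CT BC]]; apply/existsP; exists C.
by rewrite CT (subset_trans AB BC).
Qed.

Lemma tstrongS (A B : {set T}) : A \subset B -> tstrong A -> tstrong B.
Proof. by move=> AB; apply: contra; apply: tweakS. Qed.

Lemma tweak_mem (A : {set T}) : A \in Tg -> tweak A.
Proof. by move=> AT; apply/existsP; exists A; rewrite AT subxx. Qed.

Lemma kseparatingC (X : {set T}) : kseparating (~: X) = kseparating X.
Proof. by rewrite /Defs.kseparating -lamC. Qed.

Lemma lamT_le (X : {set T}) : lam setT <= lam X.
Proof.
have := lam_submod X (~: X); rewrite setICr setUCr -(lamC X) (lamC set0) setC0.
lia.
Qed.

Lemma subset_fcl (X : {set T}) : X \subset fcl X.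
Proof. by apply/bigcapsP => Y /andP [_ ->]. Qed.

Lemma fclS (X Y : {set T}) : X \subset Y -> fcl X \subset fcl Y.
Proof.
move=> XY; apply/bigcapsP => Z /andP [fcZ YZ]; apply: bigcap_inf.
by rewrite fcZ (subset_trans XY YZ).
Qed.

Lemma fully_closed_fcl (X : {set T}) : fully_closed X -> fcl X = X.
Proof.
move=> fcX; apply/eqP; rewrite eqEsubset subset_fcl andbT.
by apply: bigcap_inf; rewrite fcX subxx.
Qed.

Lemma fully_closed_weakC (Y : {set T}) : fully_closed Y -> tweak (~: Y) -> Y = setT.
Proof.
case/and3P=> _ kY /forallP closedY wCY.
apply: contraTeq (closedY (~: Y)) => YnT.
have CY0 : ~: Y != set0 by apply: contraNneq YnT => CY0; rewrite -[Y]setCK CY0 setC0.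
rewrite CY0 wCY subxx setUCr /= negbK /Defs.kseparating.
by move: kY; rewrite /Defs.kseparating; have := lamT_le Y; lia.
Qed.

Lemma fcl_weakC (X : {set T}) : tweak (~: X) -> fcl X = setT.
Proof.
move=> wCX; apply/eqP; rewrite eqEsubset subsetT; apply/bigcapsP => Y /andP [fcY XY].
by rewrite (fully_closed_weakC fcY) // (tweakS _ wCX) // setCS.
Qed.

Lemma fully_closed_absorb (P Q Y : {set T}) :
  P \subset Q -> kseparating Q -> tstrong P -> tweak (Q :\: P) ->
  fully_closed Y -> P \subset Y -> Q \subset Y.
Proof.
move=> PQ kQ sP wQP fcY PY; apply: contraT => QnY.
move: (fcY) => /and3P [_ kY /forallP closedY].
have Z0 : Q :\: Y != set0 by rewrite setD_eq0.
have wZ : tweak (Q :\: Y) by apply: tweakS wQP; apply: setDS.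
have := closedY (Q :\: Y).
rewrite Z0 wZ setDE subsetIr setUIr setUCr setIT /= /Defs.kseparating => nkYQ.
have YQ_sep : lam (Y :&: Q) <= k - 1.
  by have := lam_submod Y Q; move: kQ kY; rewrite /Defs.kseparating; lia.
case: (tangle_sep YQ_sep) => /tweak_mem wYQ.
  by case/negP: sP; apply: tweakS wYQ; rewrite subsetI PY PQ.
have wCY : tweak (~: Y) by apply: tweakS wYQ; rewrite setCS subsetIl.
by rewrite (fully_closed_weakC fcY wCY) subsetT in QnY.
Qed.

Lemma fcl_absorb (P Q : {set T}) :
  P \subset Q -> kseparating Q -> tstrong P -> tweak (Q :\: P) -> fcl P = fcl Q.
Proof.
move=> PQ kQ sP wQP; apply/eqP; rewrite eqEsubset fclS //=.
apply/bigcapsP => Y /andP [fcY PY]; apply: bigcap_inf.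
by rewrite fcY (fully_closed_absorb PQ kQ sP wQP fcY PY).
Qed.

Lemma fcl_setU_weak (X A : {set T}) :
  tstrong X -> tweak A -> kseparating (X :|: A) -> fcl (X :|: A) = fcl X.
Proof.
move=> sX wA kXA; symmetry; apply: fcl_absorb; rewrite ?subsetUl //.
by apply: tweakS wA; rewrite setDUl setDv set0U subsetDl.
Qed.

Lemma fcl_setCU_weak (X A : {set T}) :
  kseparating X -> tweak A -> tstrong (~: (X :|: A)) -> fcl (~: (X :|: A)) = fcl (~: X).
Proof.
move=> kX wA sCXA; apply: fcl_absorb; rewrite ?setCS ?subsetUl ?kseparatingC //.
by apply: tweakS wA; rewrite setDE setCK setIUr setIC setICr set0U subsetIr.
Qed.

Lemma tstrongC_setU_weak (X A : {set T}) :
  tstrong X -> tweak A -> kseparating (X :|: A) -> fcl X != setT -> tstrong (~: (X :|: A)).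
Proof.
by move=> sX wA kXA; apply: contraNN => /fcl_weakC; rewrite fcl_setU_weak // => ->.
Qed.

Lemma fcl_fully_closed (R : {set T}) :
  kseparating R -> tstrong R -> tstrong (~: R) -> fcl R != setT ->
  [/\ fully_closed (fcl R), tstrong (~: fcl R) & fcl (~: fcl R) = fcl (~: R)].
Proof.
have [n] := ubnP #|~: R|; elim: n R => // n IH R ltRn kR sR sCR fclRnT.
have [fcR | nfcR] := boolP (fully_closed R); first by rewrite fully_closed_fcl.
move: nfcR; rewrite /Defs.fully_closed sR kR /= => /forallPn [A].
rewrite negb_imply negbK => /andP [/andP [/andP [A0 wA] ACR] kRA].
have sCRA := tstrongC_setU_weak sR wA kRA fclRnT.
rewrite -(fcl_setU_weak sR wA kRA) -(fcl_setCU_weak kR wA sCRA).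
apply: IH; rewrite ?(tstrongS (subsetUl R A)) ?fcl_setU_weak //.
have RA_proper : R \proper R :|: A.
  by apply/properUl/(subsetC_disjoint _ A0 ACR); rewrite disjoints_subset.
by rewrite -ltnS (leq_trans _ ltRn) // ltnS proper_card // properC.
Qed.

Lemma strong_ksepC (X : {set T}) :
  strong_ksep lam k Tg X (~: X) = [&& kseparating X, tstrong X & tstrong (~: X)].
Proof. by rewrite /strong_ksep eqxx. Qed.

Lemma tequiv_fcl (X X' : {set T}) :
  strong_ksep lam k Tg X (~: X) -> strong_ksep lam k Tg X' (~: X') ->
  fcl X = fcl X' -> fcl (~: X) = fcl (~: X') -> tequiv lam k Tg X (~: X) X' (~: X').
Proof. by rewrite /tequiv => -> -> -> ->; rewrite !eqxx. Qed.

Lemma nonsequential_fcl (R : {set T}) : strong_ksep lam k Tg R (~: R) ->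
  nonsequential lam k Tg R (~: R) -> fcl R != setT /\ fcl (~: R) != setT.
Proof.
rewrite strong_ksepC /nonsequential /tsequential setCK kseparatingC.
by case/and3P=> -> -> -> /andP [].
Qed.

Lemma tequiv_setU_weak (R A : {set T}) : strong_ksep lam k Tg R (~: R) ->
  tweak A -> kseparating (R :|: A) -> tstrong (~: R :\: A) ->
  tequiv lam k Tg R (~: R) (R :|: A) (~: R :\: A).
Proof.
rewrite strong_ksepC setDE -setCU => /and3P [kR sR sCR] wA kRA sCRA.
have sRA := tstrongS (subsetUl R A) sR.
apply: tequiv_fcl; rewrite ?strong_ksepC ?kR ?sR ?sCR ?kRA ?sRA ?sCRA //.
  by rewrite fcl_setU_weak.
by rewrite fcl_setCU_weak.
Qed.

Lemma tequiv_sym (X Y X' Y' : {set T}) :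
  tequiv lam k Tg X Y X' Y' -> tequiv lam k Tg X' Y' X Y.
Proof.
case/and3P=> sepX sepX' /orP eq_fcl; rewrite /tequiv sepX sepX'.
by case: eq_fcl => /andP [/eqP -> /eqP ->]; rewrite !eqxx ?orbT.
Qed.

Lemma nonsequential_tequiv_setU_weak (R A : {set T}) : strong_ksep lam k Tg R (~: R) ->
  nonsequential lam k Tg R (~: R) -> tweak A -> kseparating (R :|: A) ->
  tequiv lam k Tg (R :|: A) (~: R :\: A) R (~: R).
Proof.
move=> sepR /(nonsequential_fcl sepR) [fclRnT _] wA kRA.
apply/tequiv_sym/tequiv_setU_weak => //.
move: sepR; rewrite strong_ksepC setDE -setCU => /and3P [_ sR _].
exact: tstrongC_setU_weak.
Qed.

Lemma nonsequential_tequiv_fcl (R : {set T}) : strong_ksep lam k Tg R (~: R) ->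
  nonsequential lam k Tg R (~: R) -> tequiv lam k Tg (fcl R) (~: fcl R) R (~: R).
Proof.
move=> sepR /(nonsequential_fcl sepR) [fclRnT _].
move: (sepR); rewrite strong_ksepC => /and3P [kR sR sCR].
have [fcF sCF fclCF] := fcl_fully_closed kR sR sCR fclRnT.
case/and3P: (fcF) => sF kF _.
by apply: tequiv_fcl; rewrite ?strong_ksepC ?kF ?sF ?sCF ?kR ?sR ?sCR ?(fully_closed_fcl fcF).
Qed.

Lemma nonsequential_tequiv_between (R X : {set T}) : strong_ksep lam k Tg R (~: R) ->
  nonsequential lam k Tg R (~: R) -> kseparating X -> ~: fcl (~: R) \subset X ->
  X \subset R -> tequiv lam k Tg X (~: X) R (~: R).
Proof.
move=> sepR /(nonsequential_fcl sepR) [_ fclCRnT] kX DX XR.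
move: (sepR); rewrite strong_ksepC => /and3P [kR sR sCR].
have := @fcl_fully_closed (~: R); rewrite kseparatingC setCK.
move=> /(_ kR sCR sR fclCRnT) [fcF sD fclD].
have sX : tstrong X := tstrongS DX sD.
have sCX : tstrong (~: X) by rewrite (tstrongS _ sCR) ?setCS.
apply: tequiv_fcl; rewrite ?strong_ksepC ?kX ?sX ?sCX ?kR ?sR ?sCR //.
  by apply/eqP; rewrite eqEsubset fclS //= -fclD fclS.
apply/eqP; rewrite eqEsubset; apply/andP; split; last by rewrite fclS ?setCS.
by rewrite -(fully_closed_fcl fcF) fclS // -setCS setCK.
Qed.

End FullClosure.

Theorem lemma3p8 (T : finType) (lam : {set T} -> int) (k : int)
    (Tg : {set {set T}}) (R G : {set T}) :
  connectivity_system lam ->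
  tangle lam k Tg ->
  strong_ksep lam k Tg R G ->
  [/\
   (* (i) *)
   (forall A : {set T}, A \subset G -> A != set0 -> tweak Tg A ->
      kseparating lam k (R :|: A) -> tstrong Tg (G :\: A) ->
      tequiv lam k Tg R G (R :|: A) (G :\: A)),
   (* (ii) *)
   (forall A : {set T}, nonsequential lam k Tg R G ->
      A \subset G -> A != set0 -> tweak Tg A ->
      kseparating lam k (R :|: A) ->
      tequiv lam k Tg (R :|: A) (G :\: A) R G),
   (* (iii) *)
   (nonsequential lam k Tg R G ->
      tequiv lam k Tg (fcl lam k Tg R) (~: fcl lam k Tg R) R G) &
   (* (iv) *)
   (forall X : {set T}, nonsequential lam k Tg R G ->
      kseparating lam k X -> ~: fcl lam k Tg G \subset X -> X \subset R ->
      tequiv lam k Tg X (~: X) R G)].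
Proof.
move=> [lamC lam_submod] [_ tangle_sep _ _] sepR.
case/and4P: (sepR) => /eqP GR _ _ _; subst G.
split.
- by move=> A _ _; apply: tequiv_setU_weak.
- by move=> A nsR _ _; apply: nonsequential_tequiv_setU_weak.
- exact: nonsequential_tequiv_fcl.
- by move=> X; apply: nonsequential_tequiv_between.
Qed.
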